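(* Let $X$ be a topological space, let $Y$ and $Z$ be locally compact Hausdorff spaces, let $f_1\colon X\to Y$ be continuous and let $f_2\colon Y\to Z$ be proper and continuous. Then $\beta_Y(X,f_1)\cong\beta_Z(X,f_2\circ f_1)$.
   Context: For a locally compact Hausdorff space $B$ and a space $X$ with continuous $r\colon X\to B$, let $H_{(X,r)}\subseteq\mathrm{C_b}(X)$ be the closed linear span of products $g\cdot(h\circ r)$ with $g\in\mathrm{C_b}(X)$, $h\in\mathrm C_0(B)$; the relative Stone--Čech compactification $\beta_B(X,r)$ is the spectrum of the commutative C*-algebra $H_{(X,r)}$, with canonical map $i\colon X\to\beta_B(X,r)$ sending $x$ to evaluation at $x$. *)

(* Scalars: the complex numbers
   C := R[i] over an arbitrary realType R (i.e. over the real numbers),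
   with the norm topology coming from its numFieldType structure ((_)^o). *)
From HB Require Import structures.
From mathcomp Require Import all_boot all_order all_algebra.
From mathcomp Require Import complex.
From mathcomp Require Import all_classical all_reals all_analysis.
Set Implicit Arguments. Unset Strict Implicit. Unset Printing Implicit Defensive.
Import Order.TTheory GRing.Theory Num.Theory.
Import numFieldNormedType.Exports.
Local Open Scope ring_scope.
Local Open Scope classical_set_scope.

Definition Cx (R : realType) := ((R[i])%C)^o.

Definition Cb (R : realType) (X : topologicalType) (f : X -> Cx R) : Prop :=
  continuous f /\ exists M : Cx R, forall x, `|f x| <= M.

Definition C0 (R : realType) (B : topologicalType) (h : B -> Cx R) : Prop :=
  continuous h /\
  forall eps : Cx R, 0 < eps -> compact [set b | eps <= `|h b|].

Definition rel_span (R : realType) (X B : topologicalType) (r : X -> B)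
  (p : X -> Cx R) : Prop :=
  exists (n : nat) (c : 'I_n -> Cx R) (g : 'I_n -> X -> Cx R)
         (h : 'I_n -> B -> Cx R),
    (forall i, Cb (g i)) /\ (forall i, C0 (h i)) /\
    p = (fun x => \sum_(i < n) c i * (g i x * h i (r x))).

Definition H_alg (R : realType) (X B : topologicalType) (r : X -> B)
  (f : X -> Cx R) : Prop :=
  Cb f /\ forall eps : Cx R, 0 < eps ->
    exists p, rel_span r p /\ forall x, `|f x - p x| <= eps.

(* A character (nonzero multiplicative linear functional) of a
   subalgebra A of the functions X -> C; it is represented by a total
   functional on X -> C that is 0 outside A (canonical extension), so
   that characters correspond bijectively to these functionals. *)
Definition character (R : realType) (X : Type) (A : set (X -> Cx R))
  (phi : (X -> Cx R) -> Cx R) : Prop :=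
  [/\ forall f, ~ A f -> phi f = 0,
      forall f g, A f -> A g -> phi (fun x => f x + g x) = phi f + phi g,
      forall (a : Cx R) f, A f -> phi (fun x => a * f x) = a * phi f,
      forall f g, A f -> A g -> phi (fun x => f x * g x) = phi f * phi g
    & (exists2 f, A f & phi f != 0)].

(* Gelfand spectrum of A with the weak-* topology, realised as a subspace of
   the pointwise-convergence space of functionals (the coordinates outside A
   are constantly 0, so the subspace topology is the weak-* topology). *)
Definition spectrum (R : realType) (X : Type) (A : set (X -> Cx R))
  : set {ptws (X -> Cx R) -> Cx R} :=
  [set phi | character A phi].

Definition rel_beta (R : realType) (X B : topologicalType) (r : X -> B)
  : set {ptws (X -> Cx R) -> Cx R} :=
  spectrum (H_alg r).

Definition homeomorphic (T U : topologicalType) (A : set T) (B : set U) : Prop :=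
  exists (f : T -> U) (g : U -> T),
    [/\ ({within A, continuous f}), ({within B, continuous g}),
        (f @` A `<=` B /\ g @` B `<=` A),
        (forall a, A a -> g (f a) = a) & (forall b, B b -> f (g b) = b)].

Definition proper_map (T U : topologicalType) (f : T -> U) : Prop :=
  forall K : set U, compact K -> compact (f @^-1` K).

(* H_(X,f1) and H_(X,f2 o f1) are the same subalgebra of C_b(X), so the two
   spectra are literally equal.  If h is in C_0(Z) then h o f2 is in C_0(Y)
   because f2 is proper.  Conversely, for h in C_0(Y) and d > 0 the set
   {|h| >= d} is compact, so a Urysohn function k in C_0(Z) equal to 1 on its
   image under f2 gives |h - h (k o f2)| <= d; hence every generator
   g (h o f1) is a uniform limit of generators g (h o f1) (k o f2 o f1) of
   H_(X,f2 o f1). *)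

From HB Require Import structures.
From mathcomp Require Import all_boot all_order all_algebra.
From mathcomp Require Import complex.
From mathcomp Require Import all_classical all_reals all_analysis.
Import Order.TTheory GRing.Theory Num.Theory.
Import numFieldNormedType.Exports.
Local Open Scope classical_set_scope.
Local Open Scope ring_scope.

Section ComplexScalars.
Variable R : realType.

Lemma norm_real_complex (a : R) : `|(a%:C)%C : Cx R| = (`|a|%:C)%C.
Proof. by rewrite normc_def /= expr0n /= addr0 sqrtr_sqr. Qed.

Lemma complex_gt0_real (e : Cx R) :
  0 < e -> e = ((complex.Re e)%:C)%C /\ 0 < complex.Re e.
Proof. by case: e => a b; rewrite ltcE /= => /andP[/eqP -> a0]. Qed.

Lemma continuous_real_complex : continuous (fun r : R => (r%:C)%C : Cx R).
Proof.
move=> x; apply/(@cvgrPdist_lt _ (Cx R) _ (nbhs x)) => e /complex_gt0_real [-> e0].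
have near_x : \forall t \near x, `|x - t| < complex.Re e.
  by move: (@cvg_id _ (nbhs x)) => /cvgrPdist_lt; apply.
near=> y; have /= xy := near near_x y.
have -> : ((x%:C)%C - (y%:C)%C : Cx R) = ((x - y)%:C)%C.
  by apply/eqP; rewrite eq_complex /= subrr !eqxx.
by rewrite norm_real_complex ltcR.
Unshelve. all: by end_near. Qed.

Lemma continuous_Re : continuous (fun z : Cx R => complex.Re z).
Proof.
move=> z; apply/(@cvgrPdist_lt _ R^o _ (nbhs (z : Cx R))) => e e0.
have near_z : \forall t \near z, `|z - t| < (e%:C)%C.
  by apply: (proj1 (@cvgrPdist_lt _ (Cx R) _ (nbhs z) _ id z) cvg_id); rewrite ltcR.
near=> t; have zt : `|z - t| < (e%:C)%C by near: t.
have Re_zt : complex.Re (z - t) = complex.Re z - complex.Re t.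
  by case: (z) => ? ?; case: (t).
by have := le_lt_trans (normc_ge_Re (z - t)) zt; rewrite ltcR Re_zt.
Unshelve. all: by end_near. Qed.

End ComplexScalars.

Section CompactlySupportedUrysohn.
Variables (R : realType) (Z : topologicalType).
Hypotheses (hZ : hausdorff_space Z) (lcZ : locally_compact [set: Z]).

Lemma one_point_urysohn (C : set Z) : compact C ->
  exists f : one_point_compactification Z -> R,
    [/\ continuous f, f None = 0, (forall z, 0 <= f z <= 1) &
        forall z, C z -> f (Some z) = 1].
Proof.
move=> cC; pose Zs := one_point_compactification Z.
have hZs : hausdorff_space Zs by exact: one_point_compactification_hausdorff.
have nZs : normal_space Zs.
  by apply: compact_normal => //; exact: one_point_compactification_compact.
have cC' : compact (Some @` C : set Zs).
  apply: continuous_compact => //; apply: continuous_subspaceT.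
  exact: one_point_compactification_some_continuous.
have clN : closed ([set None] : set Zs).
  exact/accessible_closed_set1/hausdorff_accessible.
have disjN : [set None] `&` (Some @` C : set Zs) = set0.
  by apply/seteqP; split => // x [-> [? _]].
have /(@uniform_separatorP _ R) [f [cf f01 f0 f1]] :=
  (proj1 (@normal_separatorP R Zs) nZs) _ _ clN (compact_closed hZs cC') disjN.
exists f; split => //.
- by apply: f0; exists None.
- by move=> z; have := f01 (f z) (ex_intro2 _ _ z I erefl); rewrite /= in_itv.
- by move=> z Cz; apply: f1; exists (Some z) => //; exists z.
Qed.

Lemma compactly_supported_urysohn (C : set Z) : compact C ->
  exists k : Z -> R, [/\ continuous k, (forall z, 0 <= k z <= 1),
    (forall z, C z -> k z = 1) &
    (forall e : R, 0 < e -> compact [set z | e <= k z])].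
Proof.
move=> /one_point_urysohn [f [cf fN f01 f1]].
have ck : continuous (f \o Some).
  move=> z; apply: continuous_comp; last exact: cf.
  exact: one_point_compactification_some_continuous.
exists (f \o Some); split => // [z|e e0]; first exact: f01.
(* {e <= k} misses a neighbourhood of infinity, i.e. lies in a compact set *)
have : (f @ (nbhs (None : one_point_compactification Z))) [set x | x < e].
  by apply: (cf None); apply: open_nbhs_nbhs; split; [exact: open_lt | rewrite /= fN].
move=> /= [K [cK clK] KW]; apply: (subclosed_compact _ cK).
  exact: (proj1 (continuous_closedP _) ck _ (@closed_ge R e)).
move=> z /= ez; apply: contrapT => Kz.
have : f (Some z) < e by apply: KW; left; exists z.
by rewrite ltNge ez.
Qed.

End CompactlySupportedUrysohn.

Section VanishingAtInfinity.
Context {R : realType}.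

Lemma C0_real_complex (Z : topologicalType) (k : Z -> R) :
  continuous k -> (forall z, 0 <= k z) ->
  (forall e : R, 0 < e -> compact [set z | e <= k z]) ->
  C0 (fun z => (k z)%:C%C : Cx R).
Proof.
move=> ck k0 kK; split.
  by move=> z; apply: continuous_comp; [exact: ck | exact: continuous_real_complex].
move=> e /complex_gt0_real [-> e0].
suff -> : [set z | ((complex.Re e)%:C)%C <= `|((k z)%:C)%C : Cx R|] =
          [set z | complex.Re e <= k z] by exact: kK.
by apply/seteqP; split => z /=; rewrite norm_real_complex ger0_norm // lecR.
Qed.

Lemma C0_bounded {Y : topologicalType} {h : Y -> Cx R} :
  C0 h -> exists M : Cx R, forall y, `|h y| <= M.
Proof.
move=> [ch hK]; pose nh y := complex.Re `|h y|.
have cnh : continuous nh.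
  move=> y; apply: continuous_comp; last exact: continuous_Re.
  by apply: continuous_comp; [exact: ch | exact: norm_continuous].
have cK : compact (nh @` [set y | 1 <= `|h y|]).
  by apply: continuous_compact; [exact: continuous_subspaceT | exact: hK].
have [M M0 HM] := pinfty_ex_gt0 (compact_bounded cK).
exists (M%:C%C + 1) => y; have [hy|hy] := pselect (1 <= `|h y|).
  have hyM : nh y <= M := le_trans (ler_norm _) (HM _ (ex_intro2 _ _ y hy erefl)).
  have -> : `|h y| = (nh y)%:C%C by rewrite RRe_real ?normr_real.
  by apply: (@le_trans _ _ M%:C%C); [rewrite lecR | rewrite lerDl ler01].
apply: (@le_trans _ _ 1); last by rewrite lerDr -[0 : Cx R]/((0 : R)%:C)%C lecR ltW.
by apply/ltW; rewrite real_ltNge ?normr_real ?(gtr0_real ltr01); exact/negP.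
Qed.

Lemma C0_comp_proper (Y Z : topologicalType) (f : Y -> Z) (h : Z -> Cx R) :
  continuous f -> proper_map f -> C0 h -> C0 (h \o f).
Proof.
move=> cf pf [ch hK]; split; last by move=> e e0; exact: pf _ (hK e e0).
by move=> y; apply: continuous_comp; [exact: cf | exact: ch].
Qed.

Lemma C0_cutoff_approx {Y Z : topologicalType} {f : Y -> Z} {h : Y -> Cx R}
    {d : Cx R} :
  hausdorff_space Z -> locally_compact [set: Z] -> continuous f ->
  C0 h -> 0 < d ->
  exists k : Z -> Cx R, C0 k /\ forall y, `|h y - h y * k (f y)| <= d.
Proof.
move=> hZ lcZ cf [ch hK] d0.
have cK : compact (f @` [set y | d <= `|h y|]).
  by apply: continuous_compact; [exact: continuous_subspaceT | exact: hK].
have [k [ck k01 k1 kK]] := @compactly_supported_urysohn R Z hZ lcZ _ cK.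
exists (fun z => (k z)%:C%C); split.
  by apply: C0_real_complex => // z; case/andP: (k01 z).
move=> y; have [hy|hy] := pselect (d <= `|h y|).
  by rewrite k1 ?mulr1 ?subrr ?normr0 ?ltW //; exists y.
have {}hy : `|h y| < d by rewrite real_ltNge ?normr_real ?gtr0_real //; exact/negP.
have -> : h y - h y * (k (f y))%:C%C = h y * ((1 - k (f y))%:C)%C.
  by rewrite -[X in X - _]mulr1 -mulrBr; congr (_ * _); apply/eqP;
     rewrite eq_complex /= oppr0 addr0 !eqxx.
rewrite normrM norm_real_complex; apply: le_trans (ltW hy).
rewrite ler_piMr // -[1 : Cx R]/((1 : R)%:C)%C lecR.
by case/andP: (k01 (f y)) => k0 k1'; rewrite ger0_norm ?subr_ge0 // lerBlDr lerDl.
Qed.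

End VanishingAtInfinity.

Section RelativeAlgebra.
Context {R : realType} {X Y Z : topologicalType} {f1 : X -> Y} {f2 : Y -> Z}.
Hypotheses (hZ : hausdorff_space Z) (lcZ : locally_compact [set: Z]).
Hypotheses (cf1 : continuous f1) (cf2 : continuous f2).

Lemma H_alg_comp_proper (f : X -> Cx R) :
  proper_map f2 -> H_alg (f2 \o f1) f -> H_alg f1 f.
Proof.
move=> pf2 [Cf Hf]; split => // eps /Hf [p [[n [c [g [h [Cg [Ch ->]]]]]] fp]].
exists (fun x => \sum_(i < n) c i * (g i x * (h i \o f2) (f1 x))); split => //.
exists n, c, g, (fun i => h i \o f2); do 2!split => //.
by move=> i; exact: C0_comp_proper.
Qed.

Lemma rel_span_term_approx_comp (c : Cx R) {g : X -> Cx R} {h : Y -> Cx R}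
    {eps : Cx R} :
  Cb g -> C0 h -> 0 < eps ->
  exists (g' : X -> Cx R) (k : Z -> Cx R), [/\ Cb g', C0 k &
    forall x, `|c * (g x * h (f1 x)) - c * (g' x * k (f2 (f1 x)))| <= eps].
Proof.
move=> [cg [M gM]] Ch eps0; have [Mh hMh] := C0_bounded Ch.
pose a := `|c| * `|M|.
have a0 : 0 <= a by rewrite mulr_ge0.
have d0 : 0 < eps / (a + 1) by rewrite divr_gt0 // ltr_wpDl.
have [k [Ck hk]] := C0_cutoff_approx hZ lcZ cf2 Ch d0.
exists (fun x => g x * h (f1 x)), k; split => //.
  split.
    move=> x; apply: continuousM; first exact: cg.
    by apply: continuous_comp; [exact: cf1 | exact: (proj1 Ch)].
  by exists (M * Mh) => x; rewrite normrM ler_pM.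
move=> x; rewrite -mulrBr -mulrA -mulrBr !normrM mulrA.
have gxM : `|g x| <= `|M|.
  by rewrite (ger0_norm (le_trans (normr_ge0 _) (gM x))).
apply: (@le_trans _ _ (a * (eps / (a + 1)))).
  by rewrite ler_pM ?mulr_ge0 ?ler_wpM2l.
by rewrite mulrA ler_pdivrMr ?ltr_wpDl // mulrC mulrDr mulr1 lerDl ltW.
Qed.

Lemma rel_span_approx_comp {p : X -> Cx R} {eps : Cx R} :
  rel_span f1 p -> 0 < eps ->
  exists q, rel_span (f2 \o f1) q /\ forall x, `|p x - q x| <= eps.
Proof.
move=> [n [c [g [h [Cg [Ch ->]]]]]] eps0.
have e0 : 0 < eps / n.+1%:R by rewrite divr_gt0 ?ltr0Sn.
have [gk approx_gk] := choice (fun i =>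
  rel_span_term_approx_comp (c i) (Cg i) (Ch i) e0).
have [k approx_k] := choice (fun i => approx_gk i).
exists (fun x => \sum_(i < n) c i * (gk i x * k i (f2 (f1 x)))); split.
  exists n, c, gk, k; split=> [i|]; first by case: (approx_k i).
  by split=> // i; case: (approx_k i).
move=> x; rewrite -sumrB; apply: le_trans (ler_norm_sum _ _ _) _.
apply: (@le_trans _ _ (\sum_(i < n) eps / n.+1%:R)).
  by apply: ler_sum => i _; case: (approx_k i) => _ _; apply.
rewrite sumr_const card_ord [leRHS](_ : eps = (eps / n.+1%:R) *+ n.+1).
  exact: ler_wpMn2l (ltW e0) _ _ (leqnSn n).
by rewrite -mulr_natr divfK ?pnatr_eq0.
Qed.

Lemma H_alg_sub_comp (f : X -> Cx R) : H_alg f1 f -> H_alg (f2 \o f1) f.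
Proof.
move=> [Cf Hf]; split => // eps eps0.
have eps20 : 0 < eps / 2 by rewrite divr_gt0.
have [p [Sp fp]] := Hf _ eps20.
have [q [Sq pq]] := rel_span_approx_comp Sp eps20.
exists q; split => // x.
by rewrite [eps]splitr; apply: le_trans (ler_distD (p x) _ _) _; apply: lerD.
Qed.

Lemma H_alg_comp_eq : proper_map f2 -> H_alg f1 = H_alg (R:=R) (f2 \o f1).
Proof.
move=> pf2; apply/funext => f; apply/propext; split.
  exact: H_alg_sub_comp.
exact: H_alg_comp_proper.
Qed.

End RelativeAlgebra.

Lemma homeomorphic_refl (T : topologicalType) (A : set T) : homeomorphic A A.
Proof.
exists id, id; split => //; last by split => _ [a Aa <-].
all: by apply: continuous_subspaceT => x; exact: cvg_id.
Qed.

Theorem lemma4p12 (R : realType) (X Y Z : topologicalType)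
  (f1 : X -> Y) (f2 : Y -> Z) :
  hausdorff_space Y -> locally_compact [set: Y] ->
  hausdorff_space Z -> locally_compact [set: Z] ->
  continuous f1 -> continuous f2 -> proper_map f2 ->
  homeomorphic (@rel_beta R X Y f1) (@rel_beta R X Z (f2 \o f1)).
Proof.
move=> _ _ hZ lcZ cf1 cf2 pf2.
by rewrite /rel_beta (H_alg_comp_eq hZ lcZ cf1 cf2 pf2); exact: homeomorphic_refl.
Qed.
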